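(* Let $n$ be an even positive integer and $m \ge 2$ an integer, and let $G$ be the Random Integer Generation game with $n$ players and $m$ strategies (defined in the context). Let $\bar{\sigma}$ be the mixed strategy profile with $\bar{\sigma}_i = (1/m, 1/m, \dots, 1/m)$ for every player $i$, i.e. each player chooses a strategy in $\{0,1,\dots,m-1\}$ uniformly at random. Then $\bar{\sigma}$ is the only Nash equilibrium of $G$, and moreover $\bar{\sigma}$ is an alliance-resistant Nash equilibrium.
   Context: A one-shot game with $n$ players consists of finite pure-strategy sets $S_1,\dots,S_n$ and utility functions $u_i : S_1\times\cdots\times S_n \to \mathbb{R}$; players choose simultaneously and independently. A mixed strategy for player $i$ is a probability distribution $\sigma_i$ on $S_i$; a mixed strategy profile is $\sigma=(\sigma_1,\dots,\sigma_n)$, and $u_i(\sigma)$ denotes the expected utility when each $s_i$ is drawn independently from $\sigma_i$. A profile $\sigma$ is a Nash equilibrium if for every player $i$ and every mixed strategy $\tilde\sigma_i$ of player $i$, $u_i(\sigma) \ge u_i(\tilde\sigma_i, \sigma_{-i})$. A profile $\sigma$ is an alliance-resistant Nash equilibrium if for every non-empty set $P$ of players and every choice of mixed strategies $\tilde\sigma_P$ for the members of $P$, $u_P(\sigma) \ge u_P(\tilde\sigma_P, \sigma_{-P})$, where $u_P$ is the sum of the utilities of the members of $P$. The Random Integer Generation (RIG) game with $n$ players ($n$ even) and $m\ge 2$ strategies: each player $i\in\{1,\dots,n\}$ has pure strategy set $S_i=\{0,1,\dots,m-1\}$. Players are paired as $(2k-1, 2k)$ for $k=1,\dots,n/2$.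 At outcome $s=(s_1,\dots,s_n)$, player $2k-1$ receives $u_{2k-1}(s)=f(s_{2k-1},s_{2k})$ and player $2k$ receives $u_{2k}(s) = -f(s_{2k-1},s_{2k})$, where $f(a,b)=1$ if $a-b\equiv 0 \pmod m$, $f(a,b)=-1$ if $a-b\equiv -1 \pmod m$, and $f(a,b)=0$ otherwise. *)

From HB Require Import structures.
From mathcomp Require Import all_boot all_order all_algebra.
Set Implicit Arguments. Unset Strict Implicit. Unset Printing Implicit Defensive.
Import Order.TTheory GRing.Theory Num.Theory.
Local Open Scope ring_scope.

(* Players are 'I_n (0-indexed): paper's pair (2k-1,2k) is our pair (2k-2,2k-1),
   i.e. player i (even, 0-indexed) is paired with i+1, the "first" member. *)
Section RIG.
Variables (R : realFieldType) (n m : nat).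

Definition rig_f (a b : 'I_m) : R :=
  if (a %% m == b %% m)%N then 1
  else if (a.+1 %% m == b %% m)%N then -1 else 0.

Definition partner (i : 'I_n) : 'I_n :=
  insubd i (if odd i then i.-1 else i.+1)%N.

Definition rig_u (i : 'I_n) (s : {ffun 'I_n -> 'I_m}) : R :=
  if odd i then - rig_f (s (partner i)) (s i) else rig_f (s i) (s (partner i)).

Definition is_mixed (p : 'I_m -> R) : Prop :=
  (forall j, 0 <= p j) /\ \sum_(j < m) p j = 1.

Definition is_profile (sigma : 'I_n -> 'I_m -> R) : Prop :=
  forall i, is_mixed (sigma i).

Definition exp_u (sigma : 'I_n -> 'I_m -> R) (i : 'I_n) : R :=
  \sum_(s : {ffun 'I_n -> 'I_m}) (\prod_(k < n) sigma k (s k)) * rig_u i s.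

Definition deviate (sigma : 'I_n -> 'I_m -> R) (P : {set 'I_n})
  (tsigma : 'I_n -> 'I_m -> R) : 'I_n -> 'I_m -> R :=
  fun i => if i \in P then tsigma i else sigma i.

Definition is_nash (sigma : 'I_n -> 'I_m -> R) : Prop :=
  is_profile sigma /\
  forall (i : 'I_n) (t : 'I_m -> R), is_mixed t ->
    exp_u (deviate sigma [set i] (fun _ => t)) i <= exp_u sigma i.

Definition alliance_resistant (sigma : 'I_n -> 'I_m -> R) : Prop :=
  is_profile sigma /\
  forall (P : {set 'I_n}) (tsigma : 'I_n -> 'I_m -> R),
    P != set0 -> (forall i, i \in P -> is_mixed (tsigma i)) ->
    \sum_(i in P) exp_u (deviate sigma P tsigma) i <= \sum_(i in P) exp_u sigma i.

Definition uniform_profile : 'I_n -> 'I_m -> R := fun _ _ => (m%:R)^-1.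

End RIG.
Arguments uniform_profile R n m _ _ : clear implicits.

From HB Require Import structures.
From mathcomp Require Import all_boot all_order all_algebra.
From mathcomp Require Import zify lra.
Set Implicit Arguments. Unset Strict Implicit. Unset Printing Implicit Defensive.
Import Order.TTheory GRing.Theory Num.Theory.
Local Open Scope ring_scope.

(* A player's expected payoff only depends on her own and her partner's mixed
   strategies, and each pair plays a zero-sum game whose payoff matrix has
   exactly one 1 and one -1 in every row and column (as m >= 2).  Hence anybody
   facing a uniformly mixing partner gets 0: this makes the uniform profile an
   equilibrium, and it is alliance-resistant because coalition members whose
   partner is outside get 0 while complete pairs inside cancel out.
   Conversely, at an equilibrium every player i gets at least 0 (she may switch
   to uniform play), so by the zero-sum property each pure reply b of her
   partner leaves her a payoff W b >= 0; these payoffs sum to 0 over b, hence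
   all vanish.  But W b = p b - p (b - 1) up to sign and indexing, where p is
   the strategy of i, so p is invariant under the cyclic shift, i.e. uniform. *)

Lemma sum_indicator_mul (R : pzSemiRingType) (T : finType) (x : T) (X : T -> R) :
  \sum_c (x == c)%:R * X c = X x.
Proof.
rewrite (bigD1 x) //= eqxx mul1r big1 ?addr0 // => c.
by rewrite eq_sym => /negbTE ->; rewrite mul0r.
Qed.

Section PairMarginal.
Variables (R : comPzSemiRingType) (I T : finType) (F : I -> T -> R).
Hypothesis F_sum1 : forall k, \sum_c F k c = 1.

Lemma sum_prod_ffun_pair_indicator (i j : I) (a b : T) : i != j ->
  \sum_(s : {ffun I -> T}) (\prod_k F k (s k)) * ((s i == a) && (s j == b))%:R
  = F i a * F j b.
Proof.
move=> nij.
pose G k c := F k c * (if k == i then (c == a)%:R else 1)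
                    * (if k == j then (c == b)%:R else 1).
have GE s : \prod_k G k (s k)
            = (\prod_k F k (s k)) * ((s i == a) && (s j == b))%:R.
  by rewrite !big_split /= -!big_mkcond !big_pred1_eq -mulnb natrM mulrA.
have sumG k : \sum_c G k c = (if k == i then F i a else 1) * (if k == j then F j b else 1).
  rewrite /G; case: (eqVneq k i) => [->|_]; last case: (eqVneq k j) => [->|_].
  - rewrite (negbTE nij) mulr1; under eq_bigr => c _ do rewrite mulr1 mulrC eq_sym.
    by rewrite sum_indicator_mul.
  - under eq_bigr => c _ do rewrite mulr1 mulrC eq_sym.
    by rewrite sum_indicator_mul mul1r.
  - by under eq_bigr => c _ do rewrite !mulr1; rewrite F_sum1 mulr1.
under eq_bigr => s _ do rewrite -GE.
rewrite -bigA_distr_bigA /=; under eq_bigr => k _ do rewrite sumG.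
by rewrite big_split /= -!big_mkcond !big_pred1_eq.
Qed.

Lemma sum_prod_ffun_pair (i j : I) (h : T -> T -> R) : i != j ->
  \sum_(s : {ffun I -> T}) (\prod_k F k (s k)) * h (s i) (s j)
  = \sum_a \sum_b F i a * F j b * h a b.
Proof.
move=> nij.
have hE s : h (s i) (s j) = \sum_a \sum_b ((s i == a) && (s j == b))%:R * h a b.
  under eq_bigr => a _ do under eq_bigr => b _ do rewrite -mulnb natrM -mulrA.
  under eq_bigr => a _ do rewrite -big_distrr /= sum_indicator_mul.
  by rewrite sum_indicator_mul.
under eq_bigr => s _ do rewrite hE big_distrr /=.
under eq_bigr => s _ do under eq_bigr => a _ do rewrite big_distrr /=.
rewrite exchange_big /=; apply: eq_bigr => a _.
rewrite exchange_big /=; apply: eq_bigr => b _.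
by rewrite -sum_prod_ffun_pair_indicator // big_distrl /=; under eq_bigr => s _ do rewrite mulrA.
Qed.

End PairMarginal.

Lemma sum_involution_odd_eq0 (R : numDomainType) (I : finType) (pi : I -> I)
    (A : pred I) (g : I -> R) :
  involutive pi -> (forall i, A (pi i) = A i) -> (forall i, g (pi i) = - g i) ->
  \sum_(i | A i) g i = 0.
Proof.
move=> piK piA gpi.
have : \sum_(i | A i) g i = - \sum_(i | A i) g i.
  rewrite {1}(reindex_inj (inv_inj piK)) /= -sumrN.
  by apply: eq_big => i; rewrite ?piA // => _; rewrite gpi.
by move/eqP; rewrite -subr_eq0 opprK -mulr2n mulrn_eq0 => /eqP.
Qed.

Section Partner.
Variable n : nat.
Hypothesis n_even : ~~ odd n.

Lemma val_partner (i : 'I_n) : val (partner i) = (if odd i then i.-1 else i.+1)%N.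
Proof.
rewrite /partner insubdK // -topredE /=; have := ltn_ord i.
case: ifP => odd_i lt_i; first lia.
have : i.+1 != n by apply: contraNneq n_even => <-; rewrite /= odd_i.
by rewrite ltn_neqAle lt_i andbT.
Qed.

Lemma odd_partner (i : 'I_n) : odd (partner i) = ~~ odd i.
Proof.
rewrite val_partner; case: i => [[|k]] _ //=.
by rewrite fun_if /= !negbK if_same.
Qed.

Lemma partner_neq (i : 'I_n) : partner i != i.
Proof. by apply/eqP => E; move: (odd_partner i); rewrite E; case: (odd i). Qed.

Lemma partnerK : involutive (@partner n).
Proof.
move=> i; apply: val_inj; rewrite val_partner odd_partner val_partner.
by case: i => [[|k]] _ //=; case: (odd k).
Qed.

End Partner.

Lemma ordS_invariant_eq (T : Type) (m : nat) (f : 'I_m -> T) :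
  (forall a, f (ordS a) = f a) -> forall a b, f a = f b.
Proof.
move=> fS.
suff f0 (m_gt0 : (0 < m)%N) k (lt_km : (k < m)%N) : f (Ordinal lt_km) = f (Ordinal m_gt0).
  move=> a b; have m_gt0 : (0 < m)%N by apply: leq_ltn_trans (ltn_ord a).
  have eta_ord (x : 'I_m) : x = Ordinal (ltn_ord x) by apply: val_inj.
  by rewrite (eta_ord a) (eta_ord b) !(f0 m_gt0).
elim: k lt_km => [|k IH] lt_km; first by congr f; apply: val_inj.
rewrite -(IH (ltnW lt_km)) -[RHS]fS; congr f; apply: val_inj => /=.
by rewrite modn_small.
Qed.

Section RigF.
Variables (R : realFieldType) (m : nat).
Hypothesis m_ge2 : (2 <= m)%N.

Lemma ordS_neq (x : 'I_m) : ordS x != x.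
Proof.
rewrite -val_eqE /=; have lt_xm := ltn_ord x.
case: (ltngtP x.+1 m) => [lt|gt|eq]; first by rewrite modn_small //; lia.
  lia.
have -> : (x.+1 %% m = 0)%N by rewrite eq modnn.
lia.
Qed.

Lemma rig_fE (a b : 'I_m) : rig_f R a b = (a == b)%:R - (ordS a == b)%:R.
Proof.
rewrite /rig_f (modn_small (ltn_ord a)) (modn_small (ltn_ord b)) val_eqE.
have -> : (a.+1 %% m == b)%N = (ordS a == b) by rewrite -val_eqE.
case: (eqVneq a b) => [<-|_]; first by rewrite (negbTE (ordS_neq a)) subr0.
by case: (ordS a == b); rewrite ?subr0 ?sub0r.
Qed.

Lemma sum_mul_rig_f_l (p : 'I_m -> R) (b : 'I_m) :
  \sum_a p a * rig_f R a b = p b - p (ord_pred b).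
Proof.
under eq_bigr => a _ do rewrite rig_fE mulrBr mulrC [p a * _]mulrC.
rewrite sumrB; congr (_ - _).
  by under eq_bigr => a _ do rewrite eq_sym; rewrite sum_indicator_mul.
rewrite (reindex_inj (@ord_pred_inj m)) /=.
by under eq_bigr => a _ do rewrite ord_predK eq_sym; rewrite sum_indicator_mul.
Qed.

Lemma sum_mul_rig_f_r (q : 'I_m -> R) (a : 'I_m) :
  \sum_b q b * rig_f R a b = q a - q (ordS a).
Proof.
under eq_bigr => b _ do rewrite rig_fE mulrBr mulrC [q b * _]mulrC.
by rewrite sumrB !sum_indicator_mul.
Qed.

End RigF.

Section Game.
Variables (R : realFieldType) (n m : nat).
Hypotheses (n_even : ~~ odd n) (m_ge2 : (2 <= m)%N).

(* [rig_u i s] unfolds to [pair_payoff i (s i) (s (partner i))]. *)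
Definition pair_payoff (i : 'I_n) (a b : 'I_m) : R :=
  if odd i then - rig_f R b a else rig_f R a b.

Definition pure_strategy (b : 'I_m) : 'I_m -> R := fun c => (b == c)%:R.

Lemma sum_pair_payoff_r (i : 'I_n) (a : 'I_m) : \sum_b pair_payoff i a b = 0.
Proof.
rewrite /pair_payoff; case: (odd i); rewrite ?sumrN.
  move: (sum_mul_rig_f_l m_ge2 (fun=> 1 : R) a); rewrite subrr.
  by under eq_bigr => b _ do rewrite mul1r; move=> ->; rewrite oppr0.
move: (sum_mul_rig_f_r m_ge2 (fun=> 1 : R) a); rewrite subrr.
by under eq_bigr => b _ do rewrite mul1r.
Qed.

Lemma sum_mul_pair_payoff_eq0_ordS (p : 'I_m -> R) (i : 'I_n) :
  (forall b, \sum_a p a * pair_payoff i a b = 0) -> forall a, p (ordS a) = p a.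
Proof.
rewrite /pair_payoff; case: (odd i) => indiff a.
  move: (indiff a); under eq_bigr => c _ do rewrite mulrN.
  rewrite sumrN (sum_mul_rig_f_r m_ge2); lra.
by move: (indiff (ordS a)); rewrite (sum_mul_rig_f_l m_ge2) ordSK; lra.
Qed.

Lemma uniform_mixed : is_mixed (fun _ : 'I_m => (m%:R : R)^-1).
Proof.
split=> [a|]; first by rewrite invr_ge0 ler0n.
by rewrite sumr_const card_ord -[_ *+ m]mulr_natr mulVf // pnatr_eq0 -lt0n ltnW.
Qed.

Lemma mixed_const_uniform (p : 'I_m -> R) :
  is_mixed p -> (forall a b, p a = p b) -> forall a, p a = m%:R^-1.
Proof.
move=> [_ p_sum1] p_const a; have m_neq0 : m%:R != 0 :> R by rewrite pnatr_eq0 -lt0n ltnW.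
apply: (mulIf m_neq0); rewrite mulVf // mulr_natr -p_sum1.
by under eq_bigr => b _ do rewrite (p_const b a); rewrite sumr_const card_ord.
Qed.

Lemma pure_strategy_mixed (b : 'I_m) : is_mixed (pure_strategy b).
Proof.
split=> [c|]; first exact: ler0n.
by under eq_bigr => c _ do rewrite -[pure_strategy b c]mulr1; rewrite sum_indicator_mul.
Qed.

Lemma is_profile_uniform : is_profile (uniform_profile R n m).
Proof. by move=> i; apply: uniform_mixed. Qed.

Lemma deviate_profile (sigma tsigma : 'I_n -> 'I_m -> R) (P : {set 'I_n}) :
  is_profile sigma -> (forall i, i \in P -> is_mixed (tsigma i)) ->
  is_profile (deviate sigma P tsigma).
Proof. by move=> sigmaP tP i; rewrite /deviate; case: ifP => [/tP|_]. Qed.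

Lemma exp_uE (sigma : 'I_n -> 'I_m -> R) (i : 'I_n) : is_profile sigma ->
  exp_u sigma i = \sum_a \sum_b sigma i a * sigma (partner i) b * pair_payoff i a b.
Proof.
move=> sigmaP; rewrite /exp_u -sum_prod_ffun_pair //; first by move=> k; case: (sigmaP k).
by rewrite eq_sym partner_neq.
Qed.

Lemma exp_u_partner (sigma : 'I_n -> 'I_m -> R) (i : 'I_n) :
  exp_u sigma (partner i) = - exp_u sigma i.
Proof.
rewrite /exp_u -sumrN; apply: eq_bigr => s _; rewrite -mulrN; congr (_ * _).
by rewrite /rig_u odd_partner // (partnerK n_even); case: (odd i); rewrite ?opprK.
Qed.

Lemma exp_u_partner_uniform (sigma : 'I_n -> 'I_m -> R) (i : 'I_n) :
  is_profile sigma -> sigma (partner i) = (fun=> m%:R^-1) -> exp_u sigma i = 0.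
Proof.
move=> sigmaP uniform_partner; rewrite exp_uE // uniform_partner big1 // => a _.
under eq_bigr => b _ do rewrite -mulrA.
by rewrite -big_distrr /= -big_distrr /= sum_pair_payoff_r !mulr0.
Qed.

Lemma exp_u_self_uniform (sigma : 'I_n -> 'I_m -> R) (i : 'I_n) :
  is_profile sigma -> sigma i = (fun=> m%:R^-1) -> exp_u sigma i = 0.
Proof.
move=> sigmaP uniform_i; rewrite -[i](partnerK n_even) exp_u_partner.
by rewrite exp_u_partner_uniform ?oppr0 ?(partnerK n_even).
Qed.

Lemma exp_u_partner_pure (sigma : 'I_n -> 'I_m -> R) (i : 'I_n) (b : 'I_m) :
  is_profile sigma ->
  exp_u (deviate sigma [set partner i] (fun=> pure_strategy b)) i
  = \sum_a sigma i a * pair_payoff i a b.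
Proof.
move=> sigmaP; rewrite exp_uE; last first.
  by apply: deviate_profile => // k _; apply: pure_strategy_mixed.
rewrite /deviate !in_set1 eqxx eq_sym (negbTE (partner_neq n_even i)).
apply: eq_bigr => a _; under eq_bigr => c _ do rewrite -mulrA.
by rewrite -big_distrr /= sum_indicator_mul.
Qed.

Lemma nash_exp_u_ge0 (sigma : 'I_n -> 'I_m -> R) (i : 'I_n) :
  is_nash sigma -> 0 <= exp_u sigma i.
Proof.
move=> [sigmaP nash]; apply: le_trans (nash i _ uniform_mixed).
rewrite exp_u_self_uniform //; last by rewrite /deviate in_set1 eqxx.
by apply: deviate_profile => // k _; apply: uniform_mixed.
Qed.

Lemma nash_partner_indifferent (sigma : 'I_n -> 'I_m -> R) (i : 'I_n) (b : 'I_m) :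
  is_nash sigma -> \sum_a sigma i a * pair_payoff i a b = 0.
Proof.
move=> nashS; have [sigmaP nash] := nashS.
have pure_reply_ge0 c : 0 <= \sum_a sigma i a * pair_payoff i a c.
  apply: le_trans (nash_exp_u_ge0 i nashS) _.
  move: (nash (partner i) _ (pure_strategy_mixed c)).
  by rewrite !exp_u_partner exp_u_partner_pure // lerN2.
have pure_replies_sum : \sum_c \sum_a sigma i a * pair_payoff i a c = 0.
  rewrite exchange_big big1 //= => a _.
  by rewrite -big_distrr /= sum_pair_payoff_r mulr0.
by apply: (psumr_eq0P _ pure_replies_sum) => // c _; apply: pure_reply_ge0.
Qed.

Lemma uniform_nash : is_nash (uniform_profile R n m).
Proof.
split=> [|i t t_mixed]; first exact: is_profile_uniform.
rewrite !exp_u_partner_uniform //; first exact: is_profile_uniform.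
  by apply: deviate_profile => [|k _]; [exact: is_profile_uniform | exact: t_mixed].
by rewrite /deviate in_set1 (negbTE (partner_neq n_even i)).
Qed.

Lemma nash_eq_uniform (sigma : 'I_n -> 'I_m -> R) :
  is_nash sigma -> forall i a, sigma i a = uniform_profile R n m i a.
Proof.
move=> nashS i; apply: mixed_const_uniform; first by case: nashS.
apply: ordS_invariant_eq; apply: (@sum_mul_pair_payoff_eq0_ordS _ i) => b.
exact: nash_partner_indifferent.
Qed.

Lemma uniform_alliance_resistant : alliance_resistant (uniform_profile R n m).
Proof.
split=> [|P t _ t_mixed]; first exact: is_profile_uniform.
set sigma := deviate _ P t.
have sigmaP : is_profile sigma by apply: deviate_profile => //; exact: is_profile_uniform.
rewrite [X in _ <= X]big1 => [|i _]; last exact: exp_u_self_uniform is_profile_uniform _.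
rewrite (bigID (fun i => partner i \in P)) /= [X in _ + X]big1 ?addr0.
  rewrite (sum_involution_odd_eq0 (partnerK n_even)) // => i.
    by rewrite (partnerK n_even) andbC.
  exact: exp_u_partner.
move=> i /andP [_ partner_out]; apply: exp_u_partner_uniform => //.
by rewrite /sigma /deviate (negbTE partner_out).
Qed.

End Game.

Theorem mainTheorem1 (R : realFieldType) (n m : nat) :
  (0 < n)%N -> ~~ odd n -> (2 <= m)%N ->
  is_nash (uniform_profile R n m) /\
  (forall sigma : 'I_n -> 'I_m -> R, is_nash sigma -> forall i j, sigma i j = uniform_profile R n m i j) /\
  alliance_resistant (uniform_profile R n m).
Proof.
move=> _ n_even m_ge2; split; first exact: uniform_nash.
split; [exact: nash_eq_uniform | exact: uniform_alliance_resistant].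
Qed.
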